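(* Let $G$ be a weakly-reversible chemical reaction network in $s$ species and let $(\mathcal{E}_G)\subseteq\mathbf{k}[x_1,\dots,x_s]$ ($\mathbf{k}$ a field of characteristic zero) be the ideal generated by its associated event-system. Then $G$ is catalytic if and only if $(\mathcal{E}_G)\subsetneq(\mathcal{E}_G):(x_1x_2\cdots x_s)^\infty$.
   Context: A chemical reaction network (CRN) consists of positive integers $s,n$, a finite directed graph $G$ with vertex set $\{1,\dots,n\}$ and edge set $E(G)$, and an injective labeling of vertex $i$ by a monic monomial $\psi_i=\prod_{j=1}^s x_j^{y_{ij}}$, $y_{ij}\in\mathbb{Z}_{\ge0}$. $G$ is weakly-reversible iff each connected component is strongly connected. The associated event-system $\mathcal{E}_G$ is the set of binomials $\psi_i-\psi_j$, one for each pair $\{i,j\}$ with $(i,j)\in E(G)$ or $(j,i)\in E(G)$. The event-graph $\overline{G}$ has as vertices all monic monomials in $x_1,\dots,x_s$, with an edge $(N\psi_i,N\psi_j)$ for each $(i,j)\in E(G)$ and each monic monomial $N$. A weakly-reversible CRN $G$ is catalytic iff there exist monic monomials $M,N$ that are path-connected in $\overline{G}$ such that $M/\gcd(M,N)$ and $N/\gcd(M,N)$ are not path-connected in $\overline{G}$. For an ideal $I$ and polynomial $f$, the saturation is $I:f^\infty=\{g : f^kg\in I \text{ for some } k>0\}$. *)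

From HB Require Import structures.
From mathcomp Require Import all_boot all_order all_algebra.
From mathcomp Require Export mpoly.
From Stdlib Require Import Relations.
Set Implicit Arguments. Unset Strict Implicit. Unset Printing Implicit Defensive.
Import Order.TTheory GRing.Theory Num.Theory.
Local Open Scope ring_scope.

(* A CRN on vertices 'I_n: directed edge relation E, vertex labeling psi by
   monic monomials (exponent vectors in 'X_{1..s}); the monomial of vertex i
   is 'X_[psi i]. *)

Definition weakly_reversible (n : nat) (E : rel 'I_n) : Prop :=
  forall i j : 'I_n,
    connect (fun a b => E a b || E b a) i j -> connect E i j.

Definition event_edge (s n : nat) (E : rel 'I_n) (psi : 'I_n -> 'X_{1..s})
    (M M' : 'X_{1..s}) : Prop :=
  exists (i j : 'I_n) (N : 'X_{1..s}),
    E i j /\ M = (N + psi i)%MM /\ M' = (N + psi j)%MM.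

Definition event_connected (s n : nat) (E : rel 'I_n) (psi : 'I_n -> 'X_{1..s})
    : 'X_{1..s} -> 'X_{1..s} -> Prop :=
  clos_refl_trans _ (event_edge E psi).

Definition mnm_gcd (s : nat) (M N : 'X_{1..s}) : 'X_{1..s} :=
  [multinom minn (M i) (N i) | i < s].

Definition catalytic (s n : nat) (E : rel 'I_n) (psi : 'I_n -> 'X_{1..s}) : Prop :=
  exists M N : 'X_{1..s},
    event_connected E psi M N /\
    ~ event_connected E psi (M - mnm_gcd M N)%MM (N - mnm_gcd M N)%MM.

Definition event_ideal (K : fieldType) (s n : nat) (E : rel 'I_n)
    (psi : 'I_n -> 'X_{1..s}) (p : {mpoly K[s]}) : Prop :=
  exists c : 'I_n -> 'I_n -> {mpoly K[s]},
    p = \sum_(i < n) \sum_(j < n | E i j)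
          c i j * ('X_[psi i] - 'X_[psi j]).

Definition saturation (K : fieldType) (s : nat) (I : {mpoly K[s]} -> Prop)
    (f : {mpoly K[s]}) (g : {mpoly K[s]}) : Prop :=
  exists k : nat, (0 < k)%N /\ I (f ^+ k * g).

Definition prod_vars (K : fieldType) (s : nat) : {mpoly K[s]} :=
  \prod_(i < s) 'X_i.

Definition strict_subset (T : Type) (A B : T -> Prop) : Prop :=
  (forall x, A x -> B x) /\ exists x, B x /\ ~ A x.

From HB Require Import structures.
From mathcomp Require Import all_boot all_order all_algebra.
From mathcomp Require Import mpoly boolp.
From mathcomp Require Import zify.
From Stdlib Require Import Relations.
Set Implicit Arguments. Unset Strict Implicit. Unset Printing Implicit Defensive.
Import GRing.Theory.
Local Open Scope ring_scope.

(* Weak reversibility makes the event graph symmetric, so its path components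
   are equivalence classes of monomials, and a polynomial lies in (E_G) iff its
   coefficients sum to zero over every class.  For a catalytic pair M, N with
   gcd g, the binomial x^(M-g) - x^(N-g) has coefficient sum 1 on the class of
   M - g, so it is not in (E_G), yet a high power of x_1...x_s times it is a
   multiple of x^M - x^N, which is in (E_G).  If G is not catalytic, x^u a ~ x^u b
   forces a ~ b, so multiplying by x^u maps classes onto classes and preserves
   class sums; hence (E_G) is saturated. *)

Section CoefficientSum.
Variables (R : nzRingType) (s : nat) (S : pred 'X_{1..s}).

Definition mcoeff_sum (p : {mpoly R[s]}) : R := \sum_(m <- msupp p | S m) p@_m.

Lemma mcoeff_sum_over (L : seq 'X_{1..s}) p :
  uniq L -> {subset msupp p <= L} -> mcoeff_sum p = \sum_(m <- L | S m) p@_m.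
Proof.
move=> uL supp_L; rewrite [RHS](bigID (mem (msupp p))) /= [X in _ + X]big1 ?addr0.
  rewrite /mcoeff_sum -[LHS]big_filter -[RHS]big_filter; apply: perm_big; apply: uniq_perm.
  - exact/filter_uniq/msupp_uniq.
  - exact: filter_uniq.
  move=> m; rewrite !mem_filter.
  by case: (boolP (m \in _)) => [/supp_L ->|]; rewrite ?andbF ?andbT.
by move=> m /andP[_]; apply: memN_msupp_eq0.
Qed.

Lemma mcoeff_sum_is_linear : linear_for *%R mcoeff_sum.
Proof.
move=> a p q; set L := undup (msupp p ++ msupp q ++ msupp (a *: p + q)).
have sub r : r \in [:: p; q; a *: p + q] -> {subset msupp r <= L}.
  by rewrite !inE => /or3P[]/eqP-> m mr; rewrite mem_undup !mem_cat mr ?orbT.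
rewrite !(@mcoeff_sum_over L) ?undup_uniq //; try by apply: sub; rewrite !inE eqxx ?orbT.
rewrite mulr_sumr -big_split; apply: eq_bigr => m _; by rewrite mcoeffD mcoeffZ.
Qed.

HB.instance Definition _ :=
  GRing.isLinear.Build R {mpoly R[s]} R *%R mcoeff_sum mcoeff_sum_is_linear.

Lemma mcoeff_sumX m : mcoeff_sum 'X_[m] = (S m)%:R.
Proof.
by rewrite /mcoeff_sum msuppX big_cons big_nil mcoeffX eqxx; case: (S m); rewrite ?addr0.
Qed.

End CoefficientSum.

Section MonomialGcd.
Variable s : nat.
Implicit Types a b u : 'X_{1..s}.

Lemma mnm_gcd_lel a b : (mnm_gcd a b <= a)%MM.
Proof. by apply/mnm_lepP => i; rewrite mnmE geq_minl. Qed.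

Lemma mnm_gcd_ler a b : (mnm_gcd a b <= b)%MM.
Proof. by apply/mnm_lepP => i; rewrite mnmE geq_minr. Qed.

Lemma mnm_gcdDl u a b : mnm_gcd (u + a) (u + b) = (u + mnm_gcd a b)%MM.
Proof. by apply/mnmP => i; rewrite !(mnmE, mnmDE) addn_minr. Qed.

Lemma submDl u a b : ((u + a) - (u + b) = a - b)%MM.
Proof. by apply/mnmP => i; rewrite !(mnmBE, mnmDE) subnDl. Qed.

End MonomialGcd.

Section EventGraph.
Variables (s n : nat) (E : rel 'I_n) (psi : 'I_n -> 'X_{1..s}).
Local Notation event_connected := (event_connected E psi).

Lemma event_connected_lift N i j :
  connect E i j -> event_connected (N + psi i)%MM (N + psi j)%MM.
Proof.
move=> /connectP[p]; elim: p i => [|k p IHp] i /=; first by move=> _ ->; apply: rt_refl.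
case/andP=> Eik path_p last_p; apply: rt_trans (IHp k path_p last_p).
by apply: rt_step; exists i, k, N.
Qed.

Lemma event_connectedDl u a b :
  event_connected a b -> event_connected (u + a)%MM (u + b)%MM.
Proof.
elim=> [_ _ [i [j [N [Eij [-> ->]]]]]|a'|a' b' c' _ IHab _ IHbc].
- by apply: rt_step; exists i, j, (u + N)%MM; rewrite !addmA.
- exact: rt_refl.
- exact: rt_trans IHab IHbc.
Qed.

Hypothesis wrE : weakly_reversible E.

Lemma event_connected_sym a b : event_connected a b -> event_connected b a.
Proof.
elim=> [_ _ [i [j [N [Eij [-> ->]]]]]|a'|a' b' c' _ IHab _ IHbc].
- by apply/event_connected_lift/wrE/connect1; rewrite Eij orbT.
- exact: rt_refl.
- exact: rt_trans IHbc IHab.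
Qed.

Definition event_class a : pred 'X_{1..s} := fun b => `[< event_connected a b >].

Lemma event_class_refl a : event_class a a.
Proof. exact/asboolP/rt_refl. Qed.

Lemma event_class_sym a b : event_class a b = event_class b a.
Proof. by apply/asboolP/asboolP => /event_connected_sym. Qed.

Lemma event_class_trans a b c : event_class a b -> event_class b c -> event_class a c.
Proof. by move=> /asboolP ab /asboolP bc; apply/asboolP/(rt_trans _ _ _ _ _ ab bc). Qed.

(* Translating a pair by u does not change its reduction by the gcd, so this
   is where non-catalyticity enters. *)
Lemma event_connected_cancel u a b : ~ catalytic E psi ->
  event_connected (u + a)%MM (u + b)%MM -> event_connected a b.
Proof.
move=> not_cat uab; set g := mnm_gcd a b.
have ab_red : event_connected (a - g)%MM (b - g)%MM.
  apply: contrapT => not_red; apply: not_cat; exists (u + a)%MM, (u + b)%MM.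
  by rewrite mnm_gcdDl !submDl.
by have := event_connectedDl g ab_red; rewrite !(addmC g) !submK ?mnm_gcd_lel ?mnm_gcd_ler.
Qed.

Section EventIdeal.
Variable K : fieldType.
Local Notation event_ideal := (@event_ideal K s n E psi).

Lemma event_ideal0 : event_ideal 0.
Proof.
by exists (fun _ _ => 0); rewrite big1 // => i _; rewrite big1 // => j _; rewrite mul0r.
Qed.

Lemma event_idealD p q : event_ideal p -> event_ideal q -> event_ideal (p + q).
Proof.
case=> c -> [d ->]; exists (fun i j => c i j + d i j).
rewrite -big_split; apply: eq_bigr => i _.
by rewrite -big_split; apply: eq_bigr => j _; rewrite mulrDl.
Qed.

Lemma event_idealMl q p : event_ideal p -> event_ideal (q * p).
Proof.
case=> c ->; exists (fun i j => q * c i j).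
rewrite mulr_sumr; apply: eq_bigr => i _.
by rewrite mulr_sumr; apply: eq_bigr => j _; rewrite mulrA.
Qed.

Lemma event_ideal_sum (T : Type) (r : seq T) (P : pred T) (F : T -> {mpoly K[s]}) :
  (forall x, P x -> event_ideal (F x)) -> event_ideal (\sum_(x <- r | P x) F x).
Proof. by move=> idF; apply: big_ind => //; [exact: event_ideal0 | exact: event_idealD]. Qed.

Lemma event_ideal_edge i j : E i j -> event_ideal ('X_[psi i] - 'X_[psi j]).
Proof.
move=> Eij; exists (fun a b => ((a == i) && (b == j))%:R).
rewrite (bigD1 i) //= (bigD1 j) //= !eqxx mul1r big1 ?addr0.
  by rewrite big1 ?addr0 // => a /negbTE->; rewrite big1 // => b _; rewrite mul0r.
by move=> b /andP[_ /negbTE->]; rewrite mul0r.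
Qed.

Lemma event_ideal_binomial a b : event_connected a b -> event_ideal ('X_[a] - 'X_[b]).
Proof.
elim=> [_ _ [i [j [N [Eij [-> ->]]]]]|a'|a' b' c' _ Iab _ Ibc].
- by rewrite !mpolyXD -mulrBr; apply/event_idealMl/event_ideal_edge.
- by rewrite subrr; apply: event_ideal0.
- by rewrite -(subrKA 'X_[b']); apply: event_idealD.
Qed.

Lemma mcoeff_sum_event_ideal a p : event_ideal p -> mcoeff_sum (event_class a) p = 0.
Proof.
case=> c ->; rewrite !linear_sum big1 // => i _; rewrite linear_sum big1 // => j Eij.
rewrite [c i j]mpolyE mulr_suml linear_sum big1 // => m _.
rewrite -scalerAl mulrBr -!mpolyXD linearZ linearB /= !mcoeff_sumX.
suff -> : event_class a (m + psi i)%MM = event_class a (m + psi j)%MM by rewrite subrr mulr0.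
have edge : event_edge E psi (m + psi i)%MM (m + psi j)%MM by exists i, j, m.
have conn := rt_step _ _ _ _ edge.
by apply/asboolP/asboolP => conn_a; apply: rt_trans conn_a _; last exact: event_connected_sym.
Qed.

Lemma event_ideal_class_combination (c : 'X_{1..s} -> K) (L : seq 'X_{1..s}) :
  (forall m, m \in L -> \sum_(m' <- L | event_class m m') c m' = 0) ->
  event_ideal (\sum_(m <- L) c m *: 'X_[m]).
Proof.
(* Split off the class of the head h: there c is a combination of binomials
   X^m - X^h plus (class sum) X^h = 0; induct on the rest with c zeroed on
   the class of h. *)
elim: L c => [|h L IHL] c sum0; first by rewrite big_nil; apply: event_ideal0.
pose c' m := if event_class h m then 0 else c m.
have -> : \sum_(m <- h :: L) c m *: 'X_[m] =
    \sum_(m <- h :: L | event_class h m) c m *: ('X_[m] - 'X_[h])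
    + (\sum_(m <- h :: L | event_class h m) c m) *: 'X_[h]
    + \sum_(m <- L) c' m *: 'X_[m].
  rewrite scaler_suml -big_split /= (bigID (event_class h)) /=; congr (_ + _).
    by apply: eq_bigr => m _; rewrite scalerBr subrK.
  rewrite big_cons event_class_refl big_mkcond /=.
  by apply: eq_bigr => m _; rewrite /c'; case: (event_class h m); rewrite ?scale0r.
rewrite sum0 ?mem_head // scale0r addr0; apply: event_idealD.
  apply: event_ideal_sum => m hm; rewrite -mul_mpolyC; apply: event_idealMl.
  by apply: event_ideal_binomial; apply/event_connected_sym/asboolP.
apply: IHL => m mL; rewrite /c'; have [hm | not_hm] := boolP (event_class h m).
  by rewrite big1 // => m' mm'; rewrite (event_class_trans hm mm').
rewrite -[RHS](sum0 m); last by rewrite in_cons mL orbT.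
rewrite big_cons; have -> : event_class m h = false by rewrite event_class_sym; apply: negbTE.
apply: eq_bigr => m' mm'; suff /negbTE-> : ~~ event_class h m' by [].
apply: contra not_hm => hm'; rewrite event_class_sym in mm'.
exact: event_class_trans hm' mm'.
Qed.

Lemma event_ideal_of_mcoeff_sums g :
  (forall m, m \in msupp g -> mcoeff_sum (event_class m) g = 0) -> event_ideal g.
Proof. by move=> sum0; rewrite [g]mpolyE; apply: event_ideal_class_combination. Qed.

Lemma binomial_notin_event_ideal a b :
  ~ event_connected a b -> ~ event_ideal ('X_[a] - 'X_[b]).
Proof.
move=> not_ab /(mcoeff_sum_event_ideal a); rewrite linearB /= !mcoeff_sumX event_class_refl.
have -> : event_class a b = false by apply/negbTE/asboolPn.
by rewrite subr0 => /eqP; rewrite oner_eq0.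
Qed.

Lemma event_classDl u a b : ~ catalytic E psi ->
  event_class (u + a)%MM (u + b)%MM = event_class a b.
Proof.
move=> not_cat; apply/asboolP/asboolP; first exact: event_connected_cancel.
exact: event_connectedDl.
Qed.

Lemma mcoeff_sum_mulX u a (g : {mpoly K[s]}) : ~ catalytic E psi ->
  mcoeff_sum (event_class (u + a)%MM) ('X_[u] * g) = mcoeff_sum (event_class a) g.
Proof.
move=> not_cat; rewrite [g in RHS]mpolyE [g in LHS]mpolyE mulr_sumr !linear_sum.
apply: eq_bigr => m _; rewrite -scalerAr -mpolyXD !linearZ /= !mcoeff_sumX.
by rewrite event_classDl.
Qed.

Local Notation saturated_ideal := (saturation event_ideal (@prod_vars K s)).

Lemma prod_varsX k : (@prod_vars K s) ^+ k = 'X_[[multinom k | _ < s]].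
Proof. by rewrite mpolyXE_id -prodrXl; apply: eq_bigr => i _; rewrite mnmE. Qed.

Lemma event_ideal_sub_saturation p : event_ideal p -> saturated_ideal p.
Proof. by exists 1%N; split => //; apply: event_idealMl. Qed.

Lemma saturation_gcd_binomial a b : event_connected a b ->
  saturated_ideal ('X_[a - mnm_gcd a b] - 'X_[b - mnm_gcd a b]).
Proof.
move=> ab; set g := mnm_gcd a b; set w := [multinom (mdeg a).+1 | _ < s].
have g_le_w : (g <= w)%MM.
  apply/mnm_lepP => i; rewrite !mnmE (leq_trans (geq_minl _ _)) // leqW // mdegE.
  by rewrite (bigD1 i) //= leq_addr.
have shift c : (g <= c)%MM -> (w + (c - g) = (w - g) + c)%MM.
  move=> /mnm_lepP g_le_c; apply/mnmP => i.
  by have := g_le_c i; have := mnm_lepP g_le_w i; rewrite !(mnmDE, mnmBE); lia.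
exists (mdeg a).+1; split => //; rewrite prod_varsX mulrBr -!mpolyXD.
rewrite !shift ?mnm_gcd_lel ?mnm_gcd_ler // !mpolyXD -mulrBr.
exact/event_idealMl/event_ideal_binomial.
Qed.

Lemma saturation_sub_event_ideal g : ~ catalytic E psi ->
  saturated_ideal g -> event_ideal g.
Proof.
move=> not_cat [k [_ I_fg]]; apply: event_ideal_of_mcoeff_sums => m _.
rewrite -(@mcoeff_sum_mulX [multinom k | _ < s]) // -prod_varsX.
exact: mcoeff_sum_event_ideal.
Qed.

End EventIdeal.

End EventGraph.

Theorem lemma3p2 (K : fieldType) (hK : [pchar K] =i pred0)
    (s n : nat) (hs : (0 < s)%N) (hn : (0 < n)%N)
    (E : rel 'I_n) (psi : 'I_n -> 'X_{1..s}) (hpsi : injective psi)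
    (hwr : weakly_reversible E) :
  catalytic E psi <->
  strict_subset (@event_ideal K s n E psi)
                (saturation (@event_ideal K s n E psi) (@prod_vars K s)).
Proof.
split=> [[M [N [MN not_red]]] | [_ [g [sat_g not_Ig]]]].
- split; first exact: event_ideal_sub_saturation.
  exists ('X_[M - mnm_gcd M N] - 'X_[N - mnm_gcd M N]); split.
    exact: saturation_gcd_binomial.
  exact: binomial_notin_event_ideal.
- apply: contrapT => not_cat; apply: not_Ig.
  exact: saturation_sub_event_ideal.
Qed.
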